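(* Let $n\ge 1$. If $1<k\le n$, then \begin{align*} \mathcal{H}_k^f(\theta_1,\dots,\theta_{2n})=\;&\mathcal{H}_k^f(\theta_3,\dots,\theta_{2n})\;\oplus\;\mathcal{H}_1^f(\theta_1,\theta_2)\otimes\mathcal{H}_{k-1}^f(\theta_3,\dots,\theta_{2n})\\ &\oplus\;\Big[\theta_1\theta_2+\frac{1}{k-n-1}\big(\theta_3\theta_4+\dots+\theta_{2n-1}\theta_{2n}\big)\Big]\mathcal{H}_{k-2}^f(\theta_3,\dots,\theta_{2n}). \end{align*} If $k=1$, then $\mathcal{H}_1^f(\theta_1,\dots,\theta_{2n})=\mathcal{H}_1^f(\theta_3,\dots,\theta_{2n})\oplus\mathcal{H}_1^f(\theta_1,\theta_2)$.
   Context: Let $\theta_1,\dots,\theta_{2n}$ be generators of the real Grassmann algebra $\Lambda_{2n}$ (anticommuting: $\theta_i\theta_j=-\theta_j\theta_i$), with Grassmann derivatives $\partial_{\theta_j}$. For a list of variables $\theta_{2a-1},\theta_{2a},\dots,\theta_{2b-1},\theta_{2b}$, the fermionic Laplacian is $\Delta_f=4\sum_{j=a}^{b}\partial_{\theta_{2j-1}}\partial_{\theta_{2j}}$, and $\mathcal{H}_k^f(\theta_{2a-1},\dots,\theta_{2b})$ denotes the space of elements of the Grassmann algebra generated by these variables which are homogeneous of degree $k$ and annihilated by this $\Delta_f$ (fermionic spherical harmonics); $\mathcal{H}_0^f$ consists of the constants. All these spaces are regarded as subspaces of $\Lambda_{2n}$. $\mathcal{H}_1^f(\theta_1,\theta_2)\otimes\mathcal{H}_{k-1}^f(\theta_3,\dots,\theta_{2n})$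 denotes the linear span of products $ab$ with $a$, $b$ in the respective spaces, and $p\,\mathcal{H}$ denotes $\{p h: h\in\mathcal{H}\}$. The sums are direct sums of subspaces. *)

From mathcomp Require Import all_boot all_order all_algebra.
Set Implicit Arguments. Unset Strict Implicit. Unset Printing Implicit Defensive.
Import Order.TTheory GRing.Theory Num.Theory.
Local Open Scope ring_scope.

(* Generators: theta_{2j+1} is (j,false), theta_{2j+2} is (j,true), for j : 'I_n
   (0-based pairs).  rk gives the 0-based position of a generator in the
   list theta_1, ..., theta_{2n}. *)
Definition gvar (n : nat) := ('I_n * bool)%type.
Definition rk n (v : gvar n) : nat := (2 * v.1 + v.2)%N.

(* An element of Lambda_{2n} is given by its coefficients on the monomial basis
   theta_S = theta_{i1} ... theta_{ik} (i1 < ... < ik, S = {i1,...,ik}). *)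
Definition grass (R : realFieldType) n := {ffun {set gvar n} -> R}.

(* number of inversions when concatenating theta_S and theta_T *)
Definition ninv n (S T : {set gvar n}) : nat :=
  #|[set p : gvar n * gvar n | [&& p.1 \in S, p.2 \in T & (rk p.2 < rk p.1)%N]]|.

Definition gmul (R : realFieldType) n (a b : grass R n) : grass R n :=
  [ffun U : {set gvar n} => \sum_(S : {set gvar n}) \sum_(T : {set gvar n})
     if [disjoint S & T] && (S :|: T == U)
     then (-1) ^+ ninv S T * a S * b T else 0].

Definition theta (R : realFieldType) n (i : gvar n) : grass R n :=
  [ffun U : {set gvar n} => if U == [set i] then 1 else 0].

Definition gone (R : realFieldType) n : grass R n :=
  [ffun U : {set gvar n} => if U == set0 then 1 else 0].

(* (left) Grassmann derivative d/d theta_i *)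
Definition gderiv (R : realFieldType) n (i : gvar n) (a : grass R n) : grass R n :=
  [ffun U : {set gvar n} => if i \in U then 0
             else (-1) ^+ #|[set x in U | (rk x < rk i)%N]| * a (i |: U)].

Definition gscale (R : realFieldType) n (c : R) (a : grass R n) : grass R n :=
  [ffun U : {set gvar n} => c * a U].

Definition gvars n (J : {set 'I_n}) : {set gvar n} := [set v : gvar n | v.1 \in J].

Definition flap (R : realFieldType) n (J : {set 'I_n}) (a : grass R n) : grass R n :=
  gscale 4 (\sum_(j in J) gderiv (j, false) (gderiv (j, true) a)).

Definition fharm (R : realFieldType) n (J : {set 'I_n}) (k : nat) (a : grass R n) : Prop :=
  (forall S, a S != 0 -> S \subset gvars J /\ #|S| = k) /\ flap J a = 0.

Definition tens (R : realFieldType) n (A B : grass R n -> Prop) (x : grass R n) : Prop :=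
  exists s : seq (grass R n * grass R n),
    (forall p, p \in s -> A p.1 /\ B p.2) /\ x = \sum_(p <- s) gmul p.1 p.2.

Definition lmulset (R : realFieldType) n (p : grass R n) (H : grass R n -> Prop)
  (x : grass R n) : Prop := exists h, H h /\ x = gmul p h.

Definition dsum2 (R : realFieldType) n (H A B : grass R n -> Prop) : Prop :=
  (forall x, H x <-> exists a b, [/\ A a, B b & x = a + b]) /\
  (forall a b a' b', A a -> B b -> A a' -> B b' -> a + b = a' + b' -> a = a' /\ b = b').

Definition dsum3 (R : realFieldType) n (H A B C : grass R n -> Prop) : Prop :=
  (forall x, H x <-> exists a b c, [/\ A a, B b, C c & x = a + b + c]) /\
  (forall a b c a' b' c', A a -> B b -> C c -> A a' -> B b' -> C c' ->
     a + b + c = a' + b' + c' -> [/\ a = a', b = b' & c = c']).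

(* index sets: all pairs (theta_1..theta_{2n}), first pair (theta_1,theta_2),
   remaining pairs (theta_3..theta_{2n}) *)
Definition Jall n : {set 'I_n} := setT.
Definition Jfirst n : {set 'I_n} := [set j : 'I_n | nat_of_ord j == 0%N].
Definition Jrest n : {set 'I_n} := [set j : 'I_n | (0 < nat_of_ord j)%N].

From mathcomp Require Import all_boot all_order all_algebra.
From mathcomp Require Import zify ring lra.
Import Order.TTheory GRing.Theory Num.Theory.
Set Implicit Arguments. Unset Strict Implicit. Unset Printing Implicit Defensive.
Local Open Scope ring_scope.

(* On coefficients, the fermionic Laplacian is -4 times the contraction
   (c a)_U = sum of a_{U + pair j} over the pairs j disjoint from U, while
   multiplication by omega = theta_3 theta_4 + ... + theta_{2n-1} theta_{2n}
   adjoins a full pair.  Counting pairs gives the commutation rule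
   [c, omega] = (#empty pairs - #full pairs), so c (omega h) = (n - 1 - m) h for
   h harmonic of degree m in theta_3, ..., theta_{2n}; with m = k - 2 this makes
   [theta_1 theta_2 + omega/(k-n-1)] h harmonic.  Writing a harmonic x of degree k as
   x_0 + theta_1 x_1 + theta_2 x_2 + theta_1 theta_2 x_12 with x_i free of
   theta_1, theta_2, harmonicity of x amounts to x_1, x_2, x_12 being harmonic and
   c x_0 = - x_12, whence x_0 - omega x_12/(k-n-1) is harmonic and x splits as
   claimed.  Uniqueness: the monomials containing theta_1 theta_2 determine the
   factor h of the third summand, and the first two summands are then told apart
   by whether a monomial contains exactly one of theta_1, theta_2. *)

Section FinsetFacts.
Variable T : finType.
Implicit Types A B S U V : {set T}.

Lemma disjointP A B :
  reflect (forall x, x \in A -> x \in B -> False) [disjoint A & B].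
Proof.
rewrite disjoints_subset; apply: (iffP subsetP) => h x hA.
  by move: (h x hA); rewrite inE => /negP.
by rewrite inE; apply/negP; exact: h x hA.
Qed.

Lemma disjointUr A U S :
  [disjoint A & U :|: S] = [disjoint A & U] && [disjoint A & S].
Proof. by rewrite !disjoints_subset setCU subsetI. Qed.

Lemma disjointDr A U S :
  [disjoint A & S] -> [disjoint A & U :\: S] = [disjoint A & U].
Proof.
move=> hAS; apply/disjointP/disjointP => h x hA.
  by move=> hU; apply: (h x hA); rewrite inE hU (disjointFr hAS hA).
by rewrite inE => /andP[_]; exact: h x hA.
Qed.

Lemma setUDK A U : [disjoint A & U] -> (U :|: A) :\: A = U.
Proof. by move=> hd; rewrite setDUl setDv setU0; apply/setDidPl; rewrite disjoint_sym. Qed.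

Lemma setUDr A B U : [disjoint A & B] -> (U :|: A) :\: B = (U :\: B) :|: A.
Proof. by move=> hd; rewrite setDUl (setDidPl hd). Qed.

Lemma setDUK B U : B \subset U -> (U :\: B) :|: B = U.
Proof. by move=> hs; rewrite setUC setDE setUIr setUCr setIT; apply/setUidPr. Qed.

Lemma subsetU_disjoint A B U :
  [disjoint B & A] -> (B \subset U :|: A) = (B \subset U).
Proof.
move=> hd; apply/idP/idP => h; last exact: subset_trans h (subsetUl _ _).
apply/subsetP => x hx; move: (subsetP h x hx).
by rewrite inE (disjointFr hd hx) orbF.
Qed.

Lemma cardsU_disjoint U S : [disjoint U & S] -> #|U :|: S| = (#|U| + #|S|)%N.
Proof. by move=> /disjoint_setI0 h; rewrite cardsU h cards0 subn0. Qed.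

Lemma disjointU_eq_setD S U V : S \subset U ->
  ([disjoint S & V] && (S :|: V == U)) = (V == U :\: S).
Proof.
move=> hSU; apply/idP/eqP => [/andP[hd /eqP <-]|->].
  by rewrite setDUl setDv set0U; apply/esym/setDidPl; rewrite disjoint_sym.
rewrite disjoint_sym setUC setDUK // eqxx andbT.
by apply/disjointP => x; rewrite inE => /andP[/negP].
Qed.

Lemma card_setIdE (I : finType) (J : {set I}) (P : pred I) :
  #|[set i in J | P i]| = (\sum_(i in J) (P i : nat))%N.
Proof.
rewrite -sum1_card big_mkcond [RHS]big_mkcond /=; apply: eq_bigr => i _.
by rewrite inE; case: (i \in J); case: (P i).
Qed.

End FinsetFacts.

Section GrassmannCoefficients.
Variables (R : realFieldType) (n : nat).
Implicit Types (a b h x : grass R n) (U S T : {set gvar n}) (J : {set 'I_n}).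

Lemma rk_inj : injective (@rk n).
Proof.
move=> [i b] [j c]; rewrite /rk /= => h.
have [hij hbc] : nat_of_ord i = j /\ b = c.
  by case: b h; case: c => /= h; split => //; lia.
by rewrite (val_inj hij) hbc.
Qed.

Definition pairv (j : 'I_n) : {set gvar n} := [set v : gvar n | v.1 == j].

Lemma pairvE j : pairv j = [set (j, false); (j, true)].
Proof.
by apply/setP => -[i b]; rewrite !inE /= !xpair_eqE; case: b; rewrite ?andbT ?andbF ?orbF.
Qed.

Lemma card_pairv j : #|pairv j| = 2%N.
Proof. by rewrite pairvE cards2 xpair_eqE eqxx. Qed.

Lemma disjoint_pairv j U :
  [disjoint pairv j & U] = ((j, false) \notin U) && ((j, true) \notin U).
Proof. by rewrite disjoint_sym pairvE disjointUr !(disjoint_sym U) !disjoints1. Qed.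

Lemma disjoint_pairvs i j : i != j -> [disjoint pairv i & pairv j].
Proof.
move=> hij; apply/disjointP => x; rewrite !inE => /eqP -> /eqP hx.
by rewrite hx eqxx in hij.
Qed.

Lemma gmulE a b U : gmul a b U =
  \sum_(S : {set gvar n} | S \subset U) (-1) ^+ ninv S (U :\: S) * a S * b (U :\: S).
Proof.
rewrite ffunE (bigID (fun S => S \subset U)) /= [X in _ + X]big1 ?addr0.
  apply: eq_bigr => S hS; rewrite (bigD1 (U :\: S)) /= ?disjointU_eq_setD ?eqxx //.
  by rewrite big1 ?addr0 // => T hT; rewrite disjointU_eq_setD // (negbTE hT).
move=> S hS; apply: big1 => T _; case: ifP => // /andP[_ /eqP hU].
by move: hS; rewrite -hU subsetUl.
Qed.

Lemma gmulDl a1 a2 b : gmul (a1 + a2) b = gmul a1 b + gmul a2 b.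
Proof.
apply/ffunP => U; rewrite [RHS]ffunE !gmulE -big_split; apply: eq_bigr => S _.
by rewrite ffunE mulrDr mulrDl.
Qed.

Lemma gmulZl c a b : gmul (gscale c a) b = gscale c (gmul a b).
Proof.
apply/ffunP => U; rewrite [RHS]ffunE !gmulE mulr_sumr; apply: eq_bigr => S _.
by rewrite ffunE mulrCA !mulrA.
Qed.

Lemma gmul_suml J (F : 'I_n -> grass R n) b :
  gmul (\sum_(j in J) F j) b = \sum_(j in J) gmul (F j) b.
Proof.
apply/ffunP => U; rewrite [RHS]sum_ffunE gmulE.
under eq_bigr do rewrite sum_ffunE mulr_sumr mulr_suml.
by rewrite exchange_big; apply: eq_bigr => j _; rewrite gmulE.
Qed.

Definition contract J a : grass R n :=
  [ffun U : {set gvar n} =>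
     \sum_(j in J) if [disjoint pairv j & U] then a (U :|: pairv j) else 0].

Lemma gderiv_pair j a U : gderiv (j, false) (gderiv (j, true) a) U =
  if [disjoint pairv j & U] then - a (U :|: pairv j) else 0.
Proof.
rewrite disjoint_pairv /gderiv !ffunE; case: (boolP ((j, false) \in U)) => hf //=.
rewrite !inE /= xpair_eqE eqxx /=; case: (boolP ((j, true) \in U)) => ht //=.
  by rewrite mulr0.
have -> : (j, true) |: ((j, false) |: U) = U :|: pairv j.
  by apply/setP => -[i b]; rewrite !inE /= !xpair_eqE; case: b; case: (i == j);
    rewrite ?orbT ?orbF.
have -> : [set x in (j, false) |: U | (rk x < rk (j, true))%N] =
          (j, false) |: [set x in U | (rk x < rk (j, false))%N].
  apply/setP => x; rewrite !inE; case: (eqVneq x (j, false)) => [->|hx] /=.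
    by rewrite /rk /= addn0 addn1 leqnn.
  case: (x \in U) => //=.
  have hrk : rk x != rk (j, false) by apply: contra_neq hx => /rk_inj.
  by move: hrk; rewrite /rk /= addn0 addn1 ltnS leq_eqVlt => /negbTE ->.
rewrite cardsU1 !inE (negbTE hf) /= exprD expr1 mulN1r mulNr mulrN mulrA.
by rewrite -expr2 sqrr_sign mul1r.
Qed.

Lemma flapE J a : flap J a = gscale (-4) (contract J a).
Proof.
apply/ffunP => U; rewrite /flap /gscale !ffunE sum_ffunE mulNr -mulrN -sumrN.
by congr (_ * _); apply: eq_bigr => j _; rewrite gderiv_pair; case: ifP; rewrite ?oppr0.
Qed.

Lemma flap_eq0 J a : flap J a = 0 <-> contract J a = 0.
Proof.
rewrite flapE; split => [/ffunP h|->]; last by apply/ffunP => U; rewrite !ffunE mulr0.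
apply/ffunP => U; move/eqP: (h U); rewrite !ffunE mulf_eq0 oppr_eq0 pnatr_eq0 /=.
by move/eqP.
Qed.

Lemma contractD J a b : contract J (a + b) = contract J a + contract J b.
Proof.
apply/ffunP => U; rewrite !ffunE -big_split; apply: eq_bigr => j _.
by case: ifP => _ /=; rewrite ?ffunE ?addr0.
Qed.

Lemma contractZ J c a : contract J (gscale c a) = gscale c (contract J a).
Proof.
apply/ffunP => U; rewrite !ffunE mulr_sumr; apply: eq_bigr => j _.
by case: ifP; rewrite ?ffunE ?mulr0.
Qed.

(* [shift S b] has the coefficients of [theta_S b] up to sign. *)
Definition shift S b : grass R n :=
  [ffun U : {set gvar n} => if S \subset U then b (U :\: S) else 0].

Lemma contract_shift J S b : (forall j, j \in J -> [disjoint pairv j & S]) ->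
  contract J (shift S b) = shift S (contract J b).
Proof.
move=> hJ; apply/ffunP => U; rewrite !ffunE; case: ifP => hSU.
  apply: eq_bigr => j hj; have hd := hJ j hj; rewrite disjointDr //.
  case: ifP => hjU //; rewrite ffunE (subset_trans hSU (subsetUl _ _)).
  by rewrite setUDr // disjoint_sym.
apply: big1 => j hj; case: ifP => // hd; rewrite ffunE subsetU_disjoint ?hSU //.
by rewrite disjoint_sym hJ.
Qed.

Lemma gmul_theta_pair j : gmul (theta R (j, false)) (theta R (j, true)) =
  [ffun U => if U == pairv j then 1 else 0].
Proof.
apply/ffunP => U; rewrite gmulE ffunE big_mkcond (bigD1 [set (j, false)]) //=.
rewrite big1 ?addr0; last first.
  by move=> S hS; rewrite ffunE (negbTE hS) mulr0 mul0r; case: ifP.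
rewrite !ffunE eqxx mulr1; case: (eqVneq U (pairv j)) => [->|hU].
  rewrite sub1set inE eqxx.
  have -> : pairv j :\: [set (j, false)] = [set (j, true)].
    by rewrite pairvE setU1K // inE xpair_eqE andbF.
  rewrite eqxx mulr1 /ninv.
  have -> : [set p : gvar n * gvar n | [&& p.1 \in [set (j, false)],
      p.2 \in [set (j, true)] & (rk p.2 < rk p.1)%N]] = set0.
    apply/setP => -[p q]; rewrite !inE /=; apply/negP => /and3P[/eqP -> /eqP ->].
    by rewrite /rk /=; lia.
  by rewrite cards0 expr0.
case: ifP => // hsub; case: ifP => [/eqP hUt|]; last by rewrite mulr0.
case/eqP: hU; rewrite sub1set in hsub.
by rewrite pairvE -hUt setD1K.
Qed.

Lemma ninv_pairv j T : [disjoint pairv j & T] ->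
  ninv (pairv j) T = (2 * #|[set w in T | (w.1 < j)%N]|)%N.
Proof.
move=> hd; rewrite /ninv -(card_pairv j) -cardsX; apply: eq_card => -[p q].
rewrite !inE /=.
case hp: (p.1 == j) => //=; case hq: (q \in T) => //=.
have hqj : q.1 != j.
  by apply/eqP => hqj; rewrite (disjointFr hd) // inE hqj in hq.
move/eqP: hp; case: p => [i b] /= ->; case: q hqj {hq} => [i' b'] /= hqj.
rewrite /rk /=; move: hqj; rewrite -(inj_eq val_inj) /=.
by case: b; case: b' => /= hne; apply/idP/idP => h; lia.
Qed.

Lemma gmul_pair_shift j h :
  gmul (gmul (theta R (j, false)) (theta R (j, true))) h = shift (pairv j) h.
Proof.
apply/ffunP => U; rewrite gmulE gmul_theta_pair ffunE big_mkcond (bigD1 (pairv j)) //=.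
rewrite big1 ?addr0; last first.
  by move=> S hS; rewrite ffunE (negbTE hS) mulr0 mul0r; case: ifP.
rewrite ffunE eqxx mulr1; case: ifP => // hsub.
rewrite ninv_pairv; first by rewrite mulnC exprM sqrr_sign mul1r.
by apply/disjointP => x hx; rewrite inE hx.
Qed.

Definition raise J h : grass R n := \sum_(j in J) shift (pairv j) h.

Lemma gmul_sum_pairs J h :
  gmul (\sum_(j in J) gmul (theta R (j, false)) (theta R (j, true))) h = raise J h.
Proof. by rewrite gmul_suml; apply: eq_bigr => j _; rewrite gmul_pair_shift. Qed.

Lemma sum_if_const J (P : pred 'I_n) (c : R) :
  \sum_(i in J) (if P i then c else 0) = #|[set i in J | P i]|%:R * c.
Proof.
rewrite -big_mkcondr mulr_natl -sumr_const; apply: eq_bigl => i; by rewrite inE.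
Qed.

Lemma contract_raise J h U : contract J (raise J h) U = raise J (contract J h) U +
  (#|[set i in J | [disjoint pairv i & U]]|%:R
   - #|[set j in J | pairv j \subset U]|%:R) * h U.
Proof.
(* [G i j]: the terms trading the full pair [j] of [U] for the empty pair [i];
   they occur on both sides. *)
pose G i j := if (j != i) && [disjoint pairv i & U] && (pairv j \subset U)
              then h ((U :\: pairv j) :|: pairv i) else 0.
have hL i : i \in J ->
    (if [disjoint pairv i & U] then raise J h (U :|: pairv i) else 0) =
    (if [disjoint pairv i & U] then h U else 0) + \sum_(j in J) G i j.
  move=> hi; case: ifP => hd; last first.
    by rewrite add0r big1 // => j _; rewrite /G hd andbF.
  rewrite /raise sum_ffunE (bigD1 i) //= [X in _ = _ + X](bigD1 i) //= /G eqxx /= add0r.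
  congr (_ + _); first by rewrite ffunE subsetUr setUDK.
  apply: eq_bigr => j /andP[hj hji]; rewrite hji /= ffunE subsetU_disjoint; last first.
    exact: disjoint_pairvs.
  by case: ifP => _; rewrite hd ?andbT ?andbF //= setUDr // disjoint_pairvs // eq_sym.
have hR j : j \in J -> shift (pairv j) (contract J h) U =
    (if pairv j \subset U then h U else 0) + \sum_(i in J) G i j.
  move=> hj; rewrite ffunE; case: ifP => hs; last first.
    by rewrite add0r big1 // => i _; rewrite /G hs andbF.
  rewrite ffunE (bigD1 j) //= [X in _ = _ + X](bigD1 j) //= /G eqxx /= add0r.
  have -> : [disjoint pairv j & U :\: pairv j].
    by apply/disjointP => x hx; rewrite inE hx.
  rewrite setDUK //; congr (_ + _); apply: eq_bigr => i /andP[hi hij].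
  by rewrite eq_sym hij /= hs andbT disjointDr // disjoint_pairvs.
rewrite ffunE (eq_bigr _ hL) big_split /= sum_if_const.
rewrite /raise sum_ffunE (eq_bigr _ hR) big_split /= sum_if_const exchange_big.
by rewrite mulrBl [RHS]addrC addrA subrK.
Qed.

Lemma count_pairs J U : U \subset gvars J ->
  (#|[set i in J | [disjoint pairv i & U]]| + #|U| =
   #|J| + #|[set j in J | pairv j \subset U]|)%N.
Proof.
move=> hU.
have -> : #|U| = (\sum_(i in J) (((i, false) \in U) + ((i, true) \in U)))%N.
  rewrite -sum1_card big_mkcond /=.
  rewrite (eq_bigr (fun x : gvar n => if (x.1, x.2) \in U then 1 else 0)%N); last by case.
  rewrite -(pair_bigA _ (fun i c => if (i, c) \in U then 1 else 0)%N) /=.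
  rewrite (bigID (mem J)) /= [X in (_ + X)%N]big1 ?addn0; last first.
    move=> i hi; rewrite big_bool /=.
    by do 2!case: ifP => [/(subsetP hU)|_]; rewrite ?inE /= ?(negbTE hi).
  by apply: eq_bigr => i _; rewrite big_bool /= addnC; do 2!case: (_ \in U).
rewrite !card_setIdE -sum1_card -!big_split /=; apply: eq_bigr => i _.
by rewrite disjoint_pairv pairvE subUset !sub1set; do 2!case: (_ \in U).
Qed.

Lemma fharm0 J k : fharm J k (0 : grass R n).
Proof.
split; first by move=> S; rewrite ffunE eqxx.
by apply/flap_eq0/ffunP => U; rewrite !ffunE big1 // => j _; rewrite ffunE; case: ifP.
Qed.

Lemma fharmD J k a b : fharm J k a -> fharm J k b -> fharm J k (a + b).
Proof.
move=> [sa /flap_eq0 ca] [sb /flap_eq0 cb]; split.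
  move=> S; rewrite ffunE; case: (eqVneq (a S) 0) => [->|/sa //].
  by rewrite add0r => /sb.
by apply/flap_eq0; rewrite contractD ca cb addr0.
Qed.

Lemma fharmZ J k c a : fharm J k a -> fharm J k (gscale c a).
Proof.
move=> [sa /flap_eq0 ca]; split.
  by move=> S; rewrite ffunE mulf_eq0 negb_or => /andP[_ /sa].
by apply/flap_eq0; rewrite contractZ ca; apply/ffunP => U; rewrite !ffunE mulr0.
Qed.

Lemma contract_raise_fharm J m h : fharm J m h ->
  contract J (raise J h) = gscale (#|J|%:R - m%:R) h.
Proof.
move=> [sh /flap_eq0 ch]; apply/ffunP => U; rewrite contract_raise ch ffunE.
rewrite /raise sum_ffunE big1 ?add0r => [|j _]; last by rewrite !ffunE; case: ifP.
case: (eqVneq (h U) 0) => [->|/sh [hs hc]]; first by rewrite !mulr0.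
have := count_pairs hs; rewrite hc => /(congr1 (fun z => z%:R : R)).
by rewrite !natrD => e; congr (_ * _); lra.
Qed.

Lemma fharm_deg_lt2 J k a : (k < 2)%N ->
  (forall S, a S != 0 -> S \subset gvars J /\ #|S| = k) -> fharm J k a.
Proof.
move=> hk ha; split=> //; apply/flap_eq0/ffunP => U; rewrite !ffunE big1 // => j _.
case: ifP => // _; apply/eqP; apply/negPn/negP => /ha [_ hc].
by have := subset_leq_card (subsetUr U (pairv j)); rewrite card_pairv hc; lia.
Qed.

Lemma shift_pair_supp j h U :
  shift (pairv j) h U != 0 -> pairv j \subset U /\ h (U :\: pairv j) != 0.
Proof. by rewrite ffunE; case: ifP => [|_]; [split | rewrite eqxx]. Qed.

Lemma card_setD_pair j U : pairv j \subset U -> #|U| = (#|U :\: pairv j| + 2)%N.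
Proof.
move=> hs; rewrite cardsDS // card_pairv.
by have := subset_leq_card hs; rewrite card_pairv; lia.
Qed.

Lemma raise_supp J h U :
  raise J h U != 0 -> exists2 j, j \in J & shift (pairv j) h U != 0.
Proof.
move=> hE; apply/exists_inP; apply: contraR hE.
rewrite negb_exists_in => /forall_inP h0.
by rewrite /raise sum_ffunE big1 // => j /h0 /negPn /eqP.
Qed.

End GrassmannCoefficients.

Section FirstPair.
Variables (R : realFieldType) (n : nat) (hn : (1 <= n)%N).
Local Notation o := (Ordinal hn).
Local Notation f := (Ordinal hn, false).
Local Notation t := (Ordinal hn, true).
Local Notation P0 := (pairv (Ordinal hn)).
Local Notation G := (grass R n).
Local Notation corrected_pair k := (gmul (theta R f) (theta R t) +
  gscale (k%:R - n%:R - 1)^-1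
   (\sum_(j in Jrest n) gmul (theta R (j, false)) (theta R (j, true)))).
Implicit Types (a b h x y : G) (U S W : {set gvar n}).

Lemma mem_Jrest j : (j \in Jrest n) = (j != o).
Proof. by rewrite inE lt0n -(inj_eq val_inj). Qed.

Lemma card_Jrest : #|Jrest n| = n.-1.
Proof.
rewrite (_ : Jrest n = [set~ o]) ?cardsC1 ?card_ord //.
by apply/setP => j; rewrite mem_Jrest !inE.
Qed.

Lemma disjoint_pairv_Jrest j : j \in Jrest n -> [disjoint pairv j & P0].
Proof. by rewrite mem_Jrest; apply: disjoint_pairvs. Qed.

Lemma theta1_in_pair : f \in P0. Proof. by rewrite inE. Qed.
Lemma theta2_in_pair : t \in P0. Proof. by rewrite inE. Qed.

Lemma sub_gvars_Jrest U : (U \subset gvars (Jrest n)) = [disjoint P0 & U].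
Proof.
have gvE v : (v \in gvars (Jrest n)) = (v \notin P0).
  by rewrite [v \in gvars _]inE mem_Jrest inE.
apply/subsetP/disjointP => h x.
  by move=> hP hU; have := h x hU; rewrite gvE hP.
by move=> hU; rewrite gvE; apply/negP => hP; exact: h x hP hU.
Qed.

Lemma sub_gvars_Jall U : U \subset gvars (Jall n).
Proof. by apply/subsetP => x _; rewrite !inE. Qed.

Lemma contract_Jall a U : contract (Jall n) a U =
  (if [disjoint P0 & U] then a (U :|: P0) else 0) + contract (Jrest n) a U.
Proof.
rewrite !ffunE (bigD1 o) ?in_setT //=; congr (_ + _); apply: eq_bigl => j.
by rewrite mem_Jrest in_setT.
Qed.

Lemma fharm_rest_eq0 k b S : fharm (Jrest n) k b -> ~~ [disjoint P0 & S] -> b S = 0.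
Proof.
by move=> [hb _] hS; apply/eqP; apply: contraNT hS => /hb[+ _]; rewrite sub_gvars_Jrest.
Qed.

Lemma fharm_rest_supp k b : fharm (Jrest n) k b -> forall S, b S != 0 -> [disjoint P0 & S].
Proof. by move=> hb S; apply: contraR => /(fharm_rest_eq0 hb) ->; rewrite eqxx. Qed.

Lemma fharm_rest_all k a : fharm (Jrest n) k a -> fharm (Jall n) k a.
Proof.
move=> ha; have [sa /flap_eq0 ca] := ha; split.
  by move=> S /sa [_ h]; split; first exact: sub_gvars_Jall.
apply/flap_eq0/ffunP => U; rewrite contract_Jall ca ffunE addr0; case: ifP => // _.
by rewrite (fharm_rest_eq0 ha) // disjoint_pairv !in_setU theta1_in_pair !orbT.
Qed.

(* No sign appears: [theta_v] precedes every generator occurring in [b]. *)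
Lemma gmul_theta_first v b : v \in P0 ->
  (forall S, b S != 0 -> [disjoint P0 & S]) -> gmul (theta R v) b = shift [set v] b.
Proof.
move=> hv hb; apply/ffunP => U.
rewrite gmulE ffunE big_mkcond (bigD1 [set v]) //= big1 ?addr0;
  last by move=> S hS; rewrite ffunE (negbTE hS) mulr0 mul0r; case: ifP.
rewrite ffunE eqxx mulr1; case: ifP => // hsub.
case: (eqVneq (b (U :\: [set v])) 0) => [->|/hb hd]; first by rewrite !mulr0.
suff -> : ninv [set v] (U :\: [set v]) = 0%N by rewrite expr0 mul1r.
apply/eqP; rewrite cards_eq0; apply/eqP/setP => -[p q]; rewrite inE /= in_set0.
apply/negP => /and3P[/set1P -> hq hrk].
have hq0 : q \in P0.
  move: hv hrk; rewrite !inE; case: v {hsub hd hq} => [i c] /= /eqP ->.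
  case: q => [i' c'] /=; rewrite /rk /= -(inj_eq val_inj) /= => hrk.
  by apply/eqP; move: hrk; case: c; case: c' => /=; lia.
by rewrite (disjointFr hd hq0) in hq.
Qed.

Lemma fharm_first1E a : fharm (Jfirst n) 1 a ->
  a = gscale (a [set f]) (theta R f) + gscale (a [set t]) (theta R t).
Proof.
move=> [ha _]; apply/ffunP => S; rewrite !ffunE.
have ft : ([set f] == [set t]) = false.
  by apply/negP => /eqP /setP /(_ f); rewrite !inE xpair_eqE eqxx.
case: (eqVneq S [set f]) => [->|hf]; first by rewrite ft mulr0 mulr1 addr0.
case: (eqVneq S [set t]) => [->|ht]; first by rewrite mulr0 mulr1 add0r.
rewrite !mulr0 addr0; apply/eqP; apply/negPn/negP => /ha [hs /eqP /cards1P [v hv]].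
move: hs hf ht; rewrite hv sub1set !inE; case: v {hv} => i c /= /eqP hi.
have -> : i = o by apply: val_inj.
by case: c; rewrite eqxx.
Qed.

Lemma fharm_theta_first v : v \in P0 -> fharm (Jfirst n) 1 (theta R v).
Proof.
move=> hv; apply: fharm_deg_lt2 => // S; rewrite ffunE.
case: ifP => [/eqP -> _|_]; last by rewrite eqxx.
by rewrite cards1 sub1set !inE; move: hv; rewrite inE => /eqP ->.
Qed.

Definition deg1_in_pair y := forall U, (f \in U) = (t \in U) -> y U = 0.

Lemma not_disjoint_pair_setUD1 U v : v \in P0 -> ~~ [disjoint P0 & (U :|: P0) :\: [set v]].
Proof.
rewrite inE disjoint_pairv => /eqP; case: v => [i c] /= ->.
by case: c; rewrite !inE /= eqxx orbT.
Qed.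

Lemma fharm_shift_first k v b : v \in P0 -> fharm (Jrest n) k.-1 b -> (0 < k)%N ->
  fharm (Jall n) k (shift [set v] b).
Proof.
move=> hv hb hk; have [sb /flap_eq0 cb] := hb; split.
  move=> S; rewrite ffunE; case: ifP => [hs hne|_]; last by rewrite eqxx.
  have [_ hc] := sb _ hne; split; first exact: sub_gvars_Jall.
  by rewrite (cardsD1 v) -sub1set hs hc; lia.
apply/flap_eq0/ffunP => U; rewrite contract_Jall contract_shift; last first.
  move=> j hj; rewrite disjoint_sym disjoints1 !inE in hv *.
  by rewrite (eqP hv) eq_sym -mem_Jrest.
rewrite cb !ffunE (fharm_rest_eq0 hb) ?not_disjoint_pair_setUD1 //.
by rewrite !if_same addr0.
Qed.

Lemma gmul_first_rest k a b : (1 < k)%N ->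
  fharm (Jfirst n) 1 a -> fharm (Jrest n) k.-1 b ->
  fharm (Jall n) k (gmul a b) /\ deg1_in_pair (gmul a b).
Proof.
move=> hk ha hb; have hbP := fharm_rest_supp hb.
rewrite (fharm_first1E ha) gmulDl !gmulZl.
rewrite (gmul_theta_first theta1_in_pair hbP) (gmul_theta_first theta2_in_pair hbP).
have hk0 : (0 < k)%N := ltnW hk.
split; first by apply: fharmD; apply: fharmZ; apply: fharm_shift_first;
  rewrite ?theta1_in_pair ?theta2_in_pair.
move=> U hU; rewrite !ffunE !sub1set hU.
case: ifP => ht; last by rewrite !mulr0 addr0.
rewrite !(fharm_rest_eq0 hb) ?mulr0 ?addr0 // disjoint_pairv !inE;
  by rewrite hU ht !xpair_eqE !eqxx.
Qed.

Lemma tens_first_rest k y : (1 < k)%N ->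
  tens (fharm (Jfirst n) 1) (fharm (Jrest n) k.-1) y ->
  fharm (Jall n) k y /\ deg1_in_pair y.
Proof.
move=> hk [s [hs ->]]; elim: s hs => [|p s IH] hs.
  by rewrite big_nil; split; [exact: fharm0 | move=> U _; rewrite ffunE].
rewrite big_cons.
have [h1 z1] := IH (fun q hq => hs q (mem_behead (s := p :: s) hq)).
have [hp1 hp2] := hs p (mem_head _ _).
have [h2 z2] := gmul_first_rest hk hp1 hp2.
by split; [exact: fharmD | move=> U hU; rewrite ffunE z1 // z2 // addr0].
Qed.

Lemma gmul_corrected_pair c h :
  gmul (gmul (theta R f) (theta R t) +
        gscale c (\sum_(j in Jrest n) gmul (theta R (j, false)) (theta R (j, true)))) h
  = shift P0 h + gscale c (raise (Jrest n) h).
Proof. by rewrite gmulDl gmulZl gmul_pair_shift gmul_sum_pairs. Qed.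

Lemma raise_rest_eq0 m h W : fharm (Jrest n) m h -> P0 \subset W ->
  raise (Jrest n) h W = 0.
Proof.
move=> hh hW; rewrite /raise sum_ffunE big1 // => j hj; rewrite ffunE.
case: ifP => // _; apply: (fharm_rest_eq0 hh).
rewrite disjointDr; last by rewrite disjoint_sym disjoint_pairv_Jrest.
by rewrite disjoint_pairv (subsetP hW _ theta1_in_pair).
Qed.

Lemma corrected_coef k : (1 < k <= n)%N ->
  1 + (k%:R - n%:R - 1)^-1 * (#|Jrest n|%:R - (k - 2)%:R) = 0 :> R.
Proof.
move=> /andP[hk hkn]; rewrite card_Jrest.
have e1 : (n.-1)%:R = n%:R - 1 :> R by rewrite -[in RHS](@prednK n) // -addn1 natrD addrK.
have e2 : (k - 2)%:R = k%:R - 2 :> R by rewrite natrB.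
have hne : k%:R - n%:R - 1 != 0 :> R.
  have : k%:R <= n%:R :> R by rewrite ler_nat.
  by move=> h; apply/eqP => h0; lra.
rewrite e1 e2 (_ : n%:R - 1 - (k%:R - 2) = - (k%:R - n%:R - 1) :> R); last by ring.
by rewrite mulrN mulVf // subrr.
Qed.

Lemma fharm_corrected k h : (1 < k <= n)%N -> fharm (Jrest n) (k - 2) h ->
  fharm (Jall n) k (shift P0 h + gscale (k%:R - n%:R - 1)^-1 (raise (Jrest n) h)).
Proof.
move=> hk hh; have [sh /flap_eq0 ch] := hh; have hk1 : (1 < k)%N by case/andP: hk.
split.
  move=> S hS; split; first exact: sub_gvars_Jall.
  have hcard j : shift (pairv j) h S != 0 -> #|S| = k.
    by move=> /shift_pair_supp [hs /sh [_ hc]]; rewrite (card_setD_pair hs) hc; lia.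
  move: hS; rewrite ffunE [gscale _ _ _]ffunE.
  case: (eqVneq (shift P0 h S) 0) => [->|/hcard //].
  by rewrite add0r mulf_eq0 negb_or => /andP[_ /raise_supp [j _ /hcard]].
apply/flap_eq0/ffunP => U.
rewrite contract_Jall contractD contractZ contract_shift; last exact: disjoint_pairv_Jrest.
rewrite (contract_raise_fharm hh) ch.
have -> : (if [disjoint P0 & U] then
    (shift P0 h + gscale (k%:R - n%:R - 1)^-1 (raise (Jrest n) h)) (U :|: P0) else 0) = h U.
  case: ifP => hd; last by rewrite (fharm_rest_eq0 hh) // hd.
  rewrite ffunE [gscale _ _ _]ffunE (raise_rest_eq0 hh (subsetUr _ _)) mulr0 addr0.
  by rewrite ffunE subsetUr setUDK.
rewrite !ffunE if_same add0r mulrA -[X in X + _]mul1r -mulrDl.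
by rewrite corrected_coef // mul0r.
Qed.

(* [slice S x] holds the coefficients of [x] on the monomials meeting
   [{theta_1, theta_2}] in exactly [S], with [theta_S] stripped off. *)
Definition slice S x : G :=
  [ffun U : {set gvar n} => if [disjoint P0 & U] then x (U :|: S) else 0].

Lemma slice_decomp x : x = slice set0 x + shift [set f] (slice [set f] x) +
  shift [set t] (slice [set t] x) + shift P0 (slice P0 x).
Proof.
apply/ffunP => U.
have hP : (P0 \subset U) = (f \in U) && (t \in U) by rewrite pairvE subUset !sub1set.
rewrite !ffunE hP !sub1set !disjoint_pairv setU0.
have hft : (f == t) = false by rewrite xpair_eqE andbF.
have htf : (t == f) = false by rewrite xpair_eqE andbF.
case hf: (f \in U); case ht: (t \in U) => /=;
  rewrite ?in_setD ?in_set1 ?theta1_in_pair ?theta2_in_pair ?hf ?ht ?hft ?htf ?eqxx /=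
    ?add0r ?addr0 //.
- by rewrite setDUK // pairvE subUset !sub1set hf ht.
- by rewrite setDUK // sub1set.
- by rewrite setDUK // sub1set.
Qed.

Lemma contract_slice S x : S \subset P0 ->
  contract (Jrest n) (slice S x) = slice S (contract (Jrest n) x).
Proof.
move=> hS; apply/ffunP => U; rewrite !ffunE; case: ifP => hd; last first.
  by apply: big1 => j hj; case: ifP => // _; rewrite ffunE disjointUr hd.
apply: eq_bigr => j hj; have hjP := disjoint_pairv_Jrest hj.
rewrite ffunE disjointUr hd (disjoint_sym P0) hjP disjointUr (disjointWr hS hjP) andbT.
by case: ifP => // _; rewrite -!setUA [pairv j :|: S]setUC.
Qed.

Lemma fharm_slice S x k m : S \subset P0 -> S != set0 -> fharm (Jall n) k x ->
  (#|S| + m = k)%N -> fharm (Jrest n) m (slice S x).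
Proof.
move=> hS hS0 [sx /flap_eq0 cx] hk; split.
  move=> U; rewrite ffunE; case: ifP => [hd hne|_]; last by rewrite eqxx.
  rewrite sub_gvars_Jrest hd; split => //; have [_] := sx _ hne.
  rewrite cardsU_disjoint; first by lia.
  by rewrite disjoint_sym; apply: disjointWl hS hd.
apply/flap_eq0; rewrite contract_slice //; apply/ffunP => U; rewrite !ffunE.
case: ifP => // hd; have /eqP := congr1 (fun g : G => g (U :|: S)) cx.
have hPS : [disjoint P0 & S] = false.
  case/set0Pn: hS0 => v hv; apply/negbTE/negP => hPS.
  by have := disjointFr hPS (subsetP hS _ hv); rewrite hv.
by rewrite contract_Jall !ffunE disjointUr hPS andbF add0r => /eqP.
Qed.

Lemma fharm_slice_pair k x : (1 < k)%N -> fharm (Jall n) k x ->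
  fharm (Jrest n) (k - 2) (slice P0 x).
Proof.
move=> hk hx; apply: (fharm_slice (subxx P0) _ hx); last by rewrite card_pairv; lia.
by apply/set0Pn; exists f; exact: theta1_in_pair.
Qed.

Lemma fharm_slice1 k x v : (0 < k)%N -> fharm (Jall n) k x -> v \in P0 ->
  fharm (Jrest n) k.-1 (slice [set v] x).
Proof.
move=> hk hx hv; apply: (fharm_slice _ _ hx); rewrite ?sub1set ?cards1 //; last by lia.
by apply/set0Pn; exists v; rewrite inE.
Qed.

Lemma fharm_first_component k x : (1 < k <= n)%N -> fharm (Jall n) k x ->
  fharm (Jrest n) k
    (slice set0 x - gscale (k%:R - n%:R - 1)^-1 (raise (Jrest n) (slice P0 x))).
Proof.
move=> hk hx; have [sx /flap_eq0 cx] := hx; have [hk1 _] := andP hk.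
set c := (k%:R - n%:R - 1)^-1.
have hD := fharm_slice_pair hk1 hx.
have -> : - gscale c (raise (Jrest n) (slice P0 x)) = gscale (- c) (raise (Jrest n) (slice P0 x)).
  by apply/ffunP => U; rewrite !ffunE mulNr.
split.
  move=> S; rewrite ffunE [gscale _ _ _]ffunE.
  case: (eqVneq (slice set0 x S) 0) => [->|hA _].
    rewrite add0r mulf_eq0 negb_or => /andP[_ /raise_supp [j hj /shift_pair_supp [hs hne]]].
    have [hsub hc] := hD.1 _ hne.
    have hPj : [disjoint P0 & pairv j] by rewrite disjoint_sym disjoint_pairv_Jrest.
    rewrite sub_gvars_Jrest -(disjointDr _ hPj) -sub_gvars_Jrest hsub.
    by rewrite (card_setD_pair hs) hc; split => //; lia.
  move: hA; rewrite ffunE setU0; case: ifP => [hd /sx [_ hc]|_]; last by rewrite eqxx.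
  by rewrite sub_gvars_Jrest hd.
apply/flap_eq0/ffunP => U; have := congr1 (fun g : G => g U) cx.
rewrite contract_Jall contractD contractZ contract_slice ?sub0set //.
rewrite (contract_raise_fharm hD) !ffunE setU0; case: ifP => hd; last first.
  by rewrite !mulr0 addr0.
set X := x (U :|: P0); set s := \sum_(j in Jrest n) _ => e.
have -> : s = - X by apply/eqP; rewrite -addr_eq0 addrC e.
rewrite mulNr mulrA -opprD -{1}[X]mul1r -mulrDl corrected_coef //.
by rewrite mul0r oppr0.
Qed.

Lemma fharm_Jall_decomp k x : (1 < k <= n)%N -> fharm (Jall n) k x ->
  exists a b c, [/\ fharm (Jrest n) k a,
    tens (fharm (Jfirst n) 1) (fharm (Jrest n) k.-1) b,
    lmulset (corrected_pair k) (fharm (Jrest n) (k - 2)) c & x = a + b + c].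
Proof.
move=> hk hx; have [hk1 _] := andP hk.
have hf := fharm_slice1 (ltnW hk1) hx theta1_in_pair.
have ht := fharm_slice1 (ltnW hk1) hx theta2_in_pair.
exists (slice set0 x - gscale (k%:R - n%:R - 1)^-1 (raise (Jrest n) (slice P0 x))).
exists (gmul (theta R f) (slice [set f] x) + gmul (theta R t) (slice [set t] x)).
exists (gmul (corrected_pair k) (slice P0 x)); split.
- exact: fharm_first_component.
- exists [:: (theta R f, slice [set f] x); (theta R t, slice [set t] x)]; split.
    move=> q; rewrite !inE => /orP[/eqP ->|/eqP ->]; split => //;
      apply: fharm_theta_first; [exact: theta1_in_pair | exact: theta2_in_pair].
  by rewrite !big_cons big_nil /= addr0.
- by exists (slice P0 x); split => //; apply: fharm_slice_pair.
rewrite gmul_corrected_pair (gmul_theta_first theta1_in_pair (fharm_rest_supp hf)).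
rewrite (gmul_theta_first theta2_in_pair (fharm_rest_supp ht)) {1}(slice_decomp x).
by rewrite (addrC (shift P0 _)) addrA (addrAC (_ - _)) subrK addrA.
Qed.

Lemma not_disjoint_setUP0 W : ~~ [disjoint P0 & W :|: P0].
Proof. by rewrite disjoint_pairv !in_setU theta1_in_pair orbT. Qed.

Lemma fharm_Jall_decomp_unique k : (1 < k)%N -> forall a b c a' b' c',
  fharm (Jrest n) k a -> tens (fharm (Jfirst n) 1) (fharm (Jrest n) k.-1) b ->
  lmulset (corrected_pair k) (fharm (Jrest n) (k - 2)) c ->
  fharm (Jrest n) k a' -> tens (fharm (Jfirst n) 1) (fharm (Jrest n) k.-1) b' ->
  lmulset (corrected_pair k) (fharm (Jrest n) (k - 2)) c' ->
  a + b + c = a' + b' + c' -> [/\ a = a', b = b' & c = c'].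
Proof.
move=> hk a b _ a' b' _ ha hb [h [hh ->]] ha' hb' [h' [hh' ->]] e.
have [_ zb] := tens_first_rest hk hb; have [_ zb'] := tens_first_rest hk hb'.
rewrite !gmul_corrected_pair in e *.
have ehh : h = h'.
  apply/ffunP => W; case: (boolP [disjoint P0 & W]) => hd; last first.
    by rewrite (fharm_rest_eq0 hh) ?(fharm_rest_eq0 hh').
  have := congr1 (fun g : G => g (W :|: P0)) e; rewrite !ffunE.
  rewrite (fharm_rest_eq0 ha (not_disjoint_setUP0 W)).
  rewrite (fharm_rest_eq0 ha' (not_disjoint_setUP0 W)).
  rewrite zb ?zb' ?in_setU ?theta1_in_pair ?theta2_in_pair ?orbT // !add0r.
  rewrite subsetUr setUDK // (raise_rest_eq0 hh (subsetUr W P0)).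
  by rewrite (raise_rest_eq0 hh' (subsetUr W P0)) !mulr0 !addr0.
move: e; rewrite -{}ehh => /addIr e.
suff hab U : a U = a' U /\ b U = b' U.
  by split => //; apply/ffunP => U; case: (hab U).
have := congr1 (fun g : G => g U) e; rewrite !ffunE.
case: (boolP ((f \in U) == (t \in U))) => [/eqP hft|hft].
  by rewrite zb // zb' // !addr0 => ->.
have hnd : ~~ [disjoint P0 & U].
  by rewrite disjoint_pairv; move: hft; case: (f \in U); case: (t \in U).
by rewrite (fharm_rest_eq0 ha hnd) (fharm_rest_eq0 ha' hnd) !add0r => ->.
Qed.

Lemma fharm_Jall1 x : fharm (Jall n) 1 x <-> forall S, x S != 0 -> #|S| = 1%N.
Proof.
split => [[sx _] S /sx [] //|h].
by apply: fharm_deg_lt2 => // S /h hc; split => //; exact: sub_gvars_Jall.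
Qed.

Lemma sub_gvars_Jfirst U : (U \subset gvars (Jfirst n)) = (U \subset P0).
Proof. by apply: eq_subset_r => v; rewrite !inE -(inj_eq val_inj). Qed.

Lemma fharm_Jall1_decomp x : fharm (Jall n) 1 x ->
  exists a b, [/\ fharm (Jrest n) 1 a, fharm (Jfirst n) 1 b & x = a + b].
Proof.
move=> [sx _]; exists (slice set0 x), (x - slice set0 x).
split; last by rewrite addrC subrK.
  apply: fharm_deg_lt2 => // S; rewrite ffunE setU0.
  case: ifP => [hd /sx [_ hc]|_]; last by rewrite eqxx.
  by rewrite sub_gvars_Jrest.
apply: fharm_deg_lt2 => // S; rewrite !ffunE setU0.
case: ifP => hd; first by rewrite subrr eqxx.
rewrite subr0 => /sx [_ /eqP /cards1P [v hv]]; subst S; rewrite cards1.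
split => //; rewrite sub_gvars_Jfirst sub1set; apply: contraFT hd => hv.
by rewrite disjoint_sym disjoints1.
Qed.

Lemma fharm_Jall1_add a b : fharm (Jrest n) 1 a -> fharm (Jfirst n) 1 b ->
  fharm (Jall n) 1 (a + b).
Proof.
move=> [sa _] [sb _]; apply/fharm_Jall1 => S; rewrite ffunE.
by case: (eqVneq (a S) 0) => [->|/sa [] //]; rewrite add0r => /sb [].
Qed.

Lemma fharm_Jall1_decomp_unique a b a' b' :
  fharm (Jrest n) 1 a -> fharm (Jfirst n) 1 b ->
  fharm (Jrest n) 1 a' -> fharm (Jfirst n) 1 b' ->
  a + b = a' + b' -> a = a' /\ b = b'.
Proof.
move=> ha hb ha' hb' e.
suff hab U : a U = a' U /\ b U = b' U.
  by split; apply/ffunP => U; case: (hab U).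
have := congr1 (fun g : G => g U) e; rewrite !ffunE.
case: (boolP [disjoint P0 & U]) => hd; last first.
  by rewrite (fharm_rest_eq0 ha hd) (fharm_rest_eq0 ha' hd) !add0r => ->.
have z b0 : fharm (Jfirst n) 1 b0 -> b0 U = 0.
  move=> [sb0 _]; apply/eqP; apply: contraTT hd => /sb0 [hU /eqP /cards1P [v hv]].
  move: hU; rewrite hv sub_gvars_Jfirst sub1set => hv0.
  by rewrite disjoint_sym disjoints1 hv0.
by rewrite (z b hb) (z b' hb') !addr0 => ->.
Qed.

End FirstPair.

Theorem mainTheorem3 (R : realFieldType) (n : nat) (hn : (1 <= n)%N) :
  (forall k : nat, (1 < k <= n)%N ->
     dsum3 (fharm (Jall n) k : grass R n -> Prop)
       (fharm (Jrest n) k)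
       (tens (fharm (Jfirst n) 1) (fharm (Jrest n) k.-1))
       (lmulset
          (gmul (theta R (Ordinal hn, false)) (theta R (Ordinal hn, true)) +
           gscale (k%:R - n%:R - 1)^-1
             (\sum_(j in Jrest n) gmul (theta R (j, false)) (theta R (j, true))))
          (fharm (Jrest n) (k - 2)))) /\
  dsum2 (fharm (Jall n) 1 : grass R n -> Prop)
    (fharm (Jrest n) 1) (fharm (Jfirst n) 1).
Proof.
split => [k hk|].
  have hk1 : (1 < k)%N by case/andP: hk.
  split => [x|]; last exact: fharm_Jall_decomp_unique.
  split; first exact: fharm_Jall_decomp.
  move=> [a [b [c [ha hb [h [hh ->]] ->]]]].
  apply: fharmD; first apply: fharmD.
  - exact: fharm_rest_all ha.
  - exact: (tens_first_rest hn hk1 hb).1.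
  - by rewrite gmul_corrected_pair; apply: fharm_corrected.
split => [x|]; last exact: fharm_Jall1_decomp_unique.
split; first exact: fharm_Jall1_decomp.
by move=> [a [b [ha hb ->]]]; exact: fharm_Jall1_add.
Qed.
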